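(* Assume the setting below, including A1–A4, with any step size $\alpha>0$. Let $\Psi(x)=\Phi(x)-\Phi^*+\frac{1}{2\alpha}d^2(x,\mathcal{X})$. Then for every $k\ge0$, $$\Psi(x_{k+1})\le\left(1-\frac{\alpha\beta}{1+\alpha\beta}\right)\Psi(x_k)-\frac{1}{2\alpha}\|x_{k+1}-x_k\|^2+\frac{L(\tau+1)}{2}\sum_{j=k-\tau}^{k}\|x_{j+1}-x_j\|^2 .$$
   Context: Problem: minimize $\Phi(x)=F(x)+h(x)$ over $x\in\mathbb{R}^d$, where $F(x)=\sum_{n=1}^N f_n(x)$. Assumption A1: each $f_n:\mathbb{R}^d\to\mathbb{R}$ is convex and differentiable with $\|\nabla f_n(x)-\nabla f_n(y)\|\le L_n\|x-y\|$ for all $x,y$; set $L=\sum_{n=1}^N L_n$. Assumption A2: $h:\mathbb{R}^d\to(-\infty,\infty]$ is proper, closed, convex, and $\partial h(x)\neq\emptyset$ for all $x$ in its effective domain. Assumption A3: the delays $\tau_k^n$ ($k\ge0$, $n=1,\dots,N$) are integers with $\tau_k^n\in\{0,1,\dots,\tau\}$ for a fixed nonnegative integer $\tau$ (the delay parameter). Assumption A4 (quadratic growth): the set $\mathcal{X}$ of minimizers of $\Phi$ is nonempty, $\Phi^*$ denotes the minimal value of $\Phi$, and there is $\beta>0$ with $\Phi(x)-\Phi^*\ge\frac{\beta}{2}d^2(x,\mathcal{X})$ for all $x\in\mathbb{R}^d$, where $d(x,\mathcal{X})=\inf_{y\in\mathcal{X}}\|x-y\|$. PIAG method: given $x_0\in\mathbb{R}^d$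 and step size $\alpha>0$, with the convention $x_j=x_0$ for $j<0$, for $k\ge0$ set $g_k=\sum_{n=1}^N\nabla f_n(x_{k-\tau_k^n})$ and $$x_{k+1}=\arg\min_{x\in\mathbb{R}^d}\Big\{h(x)+\langle g_k,x-x_k\rangle+\frac{1}{2\alpha}\|x-x_k\|^2\Big\}.$$ In particular $\|x_{j+1}-x_j\|=0$ for $j<0$. *)

From Stdlib Require Fin.
From Stdlib Require Import Reals Lra ClassicalEpsilon.
Open Scope R_scope.

Definition vec (d : nat) := Fin.t d -> R.

Fixpoint fsum (d : nat) : (Fin.t d -> R) -> R :=
  match d with
  | O => fun _ => 0
  | S d' => fun f => f Fin.F1 + fsum d' (fun i => f (Fin.FS i))
  end.

Definition vadd {d} (x y : vec d) : vec d := fun i => x i + y i.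
Definition vsub {d} (x y : vec d) : vec d := fun i => x i - y i.
Definition vscale {d} (t : R) (x : vec d) : vec d := fun i => t * x i.
Definition inner {d} (x y : vec d) : R := fsum d (fun i => x i * y i).
Definition norm {d} (x : vec d) : R := sqrt (inner x x).

Fixpoint sumR (N : nat) (a : nat -> R) : R :=
  match N with
  | O => 0
  | S N' => sumR N' a + a N'
  end.

Definition vsum {d} (N : nat) (v : nat -> vec d) : vec d :=
  fun i => sumR N (fun n => v n i).

Definition is_gradient {d} (f : vec d -> R) (g : vec d -> vec d) : Prop :=
  forall x eps, 0 < eps -> exists delta, 0 < delta /\
    forall y, norm (vsub y x) < delta ->
      Rabs (f y - f x - inner (g x) (vsub y x)) <= eps * norm (vsub y x).

Definition convex_fun {d} (f : vec d -> R) : Prop :=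
  forall x y t, 0 <= t <= 1 ->
    f (vadd (vscale t x) (vscale (1 - t) y)) <= t * f x + (1 - t) * f y.

(* An extended-valued h : R^d -> (-oo, +oo] is represented by its effective
   domain dom and its (real) values hv on dom; h = +oo outside dom. *)
Definition proper_h {d} (dom : vec d -> Prop) : Prop := exists x, dom x.

Definition convex_ext {d} (dom : vec d -> Prop) (hv : vec d -> R) : Prop :=
  forall x y t, dom x -> dom y -> 0 <= t <= 1 ->
    dom (vadd (vscale t x) (vscale (1 - t) y)) /\
    hv (vadd (vscale t x) (vscale (1 - t) y)) <= t * hv x + (1 - t) * hv y.

Definition converges {d} (u : nat -> vec d) (x : vec d) : Prop :=
  forall eps, 0 < eps -> exists K, forall k, (K <= k)%nat -> norm (vsub (u k) x) < eps.

(* closed = epigraph {(x,t) | x in dom, hv x <= t} is closed *)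
Definition closed_ext {d} (dom : vec d -> Prop) (hv : vec d -> R) : Prop :=
  forall (u : nat -> vec d) (t : nat -> R) (x : vec d) (s : R),
    (forall k, dom (u k) /\ hv (u k) <= t k) ->
    converges u x -> Un_cv t s -> dom x /\ hv x <= s.

Definition subdiff_nonempty {d} (dom : vec d -> Prop) (hv : vec d -> R) : Prop :=
  forall x, dom x -> exists g : vec d,
    forall y, dom y -> hv x + inner g (vsub y x) <= hv y.

Definition FF {d} (N : nat) (f : nat -> vec d -> R) (x : vec d) : R :=
  sumR N (fun n => f n x).
Definition Phi {d} (N : nat) (f : nat -> vec d -> R) (hv : vec d -> R) (x : vec d) : R :=
  FF N f x + hv x.

Definition Xset {d} (N : nat) (f : nat -> vec d -> R) (dom : vec d -> Prop)
  (hv : vec d -> R) (Phistar : R) : vec d -> Prop :=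
  fun y => dom y /\ Phi N f hv y = Phistar.

Definition is_inf (E : R -> Prop) (m : R) : Prop :=
  (forall r, E r -> m <= r) /\ (forall m', (forall r, E r -> m' <= r) -> m' <= m).

Definition dist_set {d} (X : vec d -> Prop) (x : vec d) : R :=
  epsilon (inhabits 0) (fun m => is_inf (fun r => exists y, X y /\ r = norm (vsub x y)) m).

Definition Psi {d} (N : nat) (f : nat -> vec d -> R) (dom : vec d -> Prop)
  (hv : vec d -> R) (Phistar alpha : R) (x : vec d) : R :=
  Phi N f hv x - Phistar + / (2 * alpha) * (dist_set (Xset N f dom hv Phistar) x) ^ 2.

Definition is_argmin {d} (dom : vec d -> Prop) (obj : vec d -> R) (z : vec d) : Prop :=
  dom z /\ forall y, dom y -> obj z <= obj y.

(* PIAG step k: x (S k) = argmin { h(y) + <g_k, y - x_k> + 1/(2 alpha) ||y - x_k||^2 },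
   g_k = sum_n grad f_n (x_{k - tau_k^n}); nat subtraction realizes x_j = x_0 for j < 0. *)
Definition piag_step {d} (N : nat) (gf : nat -> vec d -> vec d) (delay : nat -> nat -> nat)
  (dom : vec d -> Prop) (hv : vec d -> R) (alpha : R) (x : nat -> vec d) (k : nat) : Prop :=
  let gk := vsum N (fun n => gf n (x (k - delay k n)%nat)) in
  is_argmin dom
    (fun y => hv y + inner gk (vsub y (x k)) + / (2 * alpha) * (norm (vsub y (x k))) ^ 2)
    (x (S k)).

From Stdlib Require Import Reals Lra Psatz Lia ClassicalEpsilon FunctionalExtensionality.
Open Scope R_scope.

(* For each [n], convexity of [f_n] at the delayed point [z_n] together with the
   descent lemma gives [f_n(x_(k+1)) <= f_n(y) + <grad f_n(z_n), x_(k+1) - y>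
   + L_n/2 ||x_(k+1) - z_n||^2]; since [z_n] lags at most [tau] steps, telescoping and
   Cauchy-Schwarz bound [||x_(k+1) - z_n||^2] by [(tau+1)] times the window of the last
   [tau+1] squared steps.  Adding the three-point inequality of the proximal step and taking
   [y] a minimizer yields [Psi(x_(k+1)) + ||x_(k+1) - x_k||^2/(2 alpha) - (delay term)
   <= d^2(x_k, X)/(2 alpha)], and quadratic growth turns [d^2(x_k, X)/(2 alpha)] into the
   fraction [1/(1 + alpha beta)] of [Psi(x_k)]. *)

Ltac vec_eq := apply functional_extensionality; intro; unfold vadd, vsub, vscale; ring.

Lemma fsum_ext d (f g : Fin.t d -> R) : (forall i, f i = g i) -> fsum d f = fsum d g.
Proof.
  induction d as [|d IH] in f, g |- *; intros H; simpl; [reflexivity|].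
  rewrite H, (IH _ (fun i => g (Fin.FS i))); auto.
Qed.

Lemma fsum_add d (f g : Fin.t d -> R) : fsum d (fun i => f i + g i) = fsum d f + fsum d g.
Proof.
  induction d as [|d IH] in f, g |- *; simpl; [lra|].
  rewrite (IH (fun i => f (Fin.FS i)) (fun i => g (Fin.FS i))); lra.
Qed.

Lemma fsum_scal d c (f : Fin.t d -> R) : fsum d (fun i => c * f i) = c * fsum d f.
Proof.
  induction d as [|d IH] in f |- *; simpl; [lra|].
  rewrite (IH (fun i => f (Fin.FS i))); lra.
Qed.

Lemma fsum_nonneg d (f : Fin.t d -> R) : (forall i, 0 <= f i) -> 0 <= fsum d f.
Proof.
  induction d as [|d IH] in f |- *; intros H; simpl; [lra|].
  pose proof (H Fin.F1); pose proof (IH (fun i => f (Fin.FS i)) (fun i => H _)); lra.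
Qed.

Lemma inner_sym d (x y : vec d) : inner x y = inner y x.
Proof. apply fsum_ext; intros; ring. Qed.

Lemma inner_add_l d (x y z : vec d) : inner (vadd x y) z = inner x z + inner y z.
Proof. unfold inner, vadd; rewrite <- fsum_add; apply fsum_ext; intros; ring. Qed.

Lemma inner_scale_l d t (x z : vec d) : inner (vscale t x) z = t * inner x z.
Proof. unfold inner, vscale; rewrite <- fsum_scal; apply fsum_ext; intros; ring. Qed.

Lemma inner_sub_l d (x y z : vec d) : inner (vsub x y) z = inner x z - inner y z.
Proof.
  replace (vsub x y) with (vadd x (vscale (-1) y)) by vec_eq.
  rewrite inner_add_l, inner_scale_l; ring.
Qed.

Lemma inner_add_r d (x y z : vec d) : inner z (vadd x y) = inner z x + inner z y.
Proof. rewrite !(inner_sym d z); apply inner_add_l. Qed.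

Lemma inner_sub_r d (x y z : vec d) : inner z (vsub x y) = inner z x - inner z y.
Proof. rewrite !(inner_sym d z); apply inner_sub_l. Qed.

Lemma inner_scale_r d t (x z : vec d) : inner z (vscale t x) = t * inner z x.
Proof. rewrite !(inner_sym d z); apply inner_scale_l. Qed.

Lemma inner_self_ge0 d (x : vec d) : 0 <= inner x x.
Proof. apply fsum_nonneg; intros; nra. Qed.

Lemma norm_ge0 d (x : vec d) : 0 <= norm x.
Proof. apply sqrt_pos. Qed.

Lemma norm_sq d (x : vec d) : norm x ^ 2 = inner x x.
Proof. apply pow2_sqrt, inner_self_ge0. Qed.

Lemma norm_vsub_sym d (x y : vec d) : norm (vsub x y) = norm (vsub y x).
Proof.
  unfold norm; f_equal.
  rewrite !inner_sub_l, !inner_sub_r, (inner_sym d x y); ring.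
Qed.

Lemma norm_scale d t (x : vec d) : norm (vscale t x) = Rabs t * norm x.
Proof.
  unfold norm; rewrite inner_scale_l, inner_scale_r, <- Rmult_assoc.
  rewrite sqrt_mult by (nra || apply inner_self_ge0).
  f_equal; rewrite <- sqrt_Rsqr_abs; reflexivity.
Qed.

(* Use [(s, t) = (B, -C)] and [(C, -A)]; if [A = B = 0], use [(1, -C)]. *)
Lemma quadratic_form_discriminant A B C :
  (forall s t, 0 <= s * s * A + 2 * s * t * C + t * t * B) -> C * C <= A * B.
Proof.
  intros H.
  pose proof (H 1 0) as HA; pose proof (H 0 1) as HB.
  pose proof (H B (- C)) as HBC; pose proof (H C (- A)) as HAC; pose proof (H 1 (- C)) as H0.
  destruct (Rle_dec (C * C) (A * B)) as [|Hlt]; [assumption|exfalso].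
  assert (B * (A * B - C * C) >= 0) by nra.
  assert (A * (A * B - C * C) >= 0) by nra.
  assert (B = 0) by nra; assert (A = 0) by nra; subst; nra.
Qed.

Lemma cauchy_schwarz d (x y : vec d) : inner x y <= norm x * norm y.
Proof.
  assert (Hq : inner x y * inner x y <= inner x x * inner y y).
  { apply quadratic_form_discriminant; intros s t.
    pose proof (inner_self_ge0 d (vadd (vscale s x) (vscale t y))) as H.
    rewrite !inner_add_l, !inner_add_r, !inner_scale_l, !inner_scale_r, (inner_sym d y x) in H.
    lra. }
  unfold norm; rewrite <- sqrt_mult by apply inner_self_ge0.
  destruct (Rle_dec (inner x y) 0); [pose proof (sqrt_pos (inner x x * inner y y)); lra|].
  rewrite <- (sqrt_square (inner x y)) by lra.
  apply sqrt_le_1_alt; exact Hq.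
Qed.

Lemma norm_triangle d (x y : vec d) : norm (vadd x y) <= norm x + norm y.
Proof.
  pose proof (norm_ge0 d x); pose proof (norm_ge0 d y); pose proof (cauchy_schwarz d x y).
  apply Rsqr_incr_0_var; [|lra]; unfold Rsqr.
  assert (Hx : norm x * norm x = inner x x) by apply sqrt_sqrt, inner_self_ge0.
  assert (Hy : norm y * norm y = inner y y) by apply sqrt_sqrt, inner_self_ge0.
  unfold norm at 1 2; rewrite sqrt_sqrt by apply inner_self_ge0.
  rewrite !inner_add_l, !inner_add_r, (inner_sym d y x); nra.
Qed.

Definition lipschitz {d} (g : vec d -> vec d) (L : R) : Prop :=
  forall y z, norm (vsub (g y) (g z)) <= L * norm (vsub y z).

Lemma gradient_directional_deriv d (f : vec d -> R) g : is_gradient f g -> forall x v t,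
  derivable_pt_lim (fun s => f (vadd x (vscale s v))) t (inner (g (vadd x (vscale t v))) v).
Proof.
  intros Hg x v t eps Heps.
  pose proof (norm_ge0 d v) as Hv; set (nv := norm v) in *.
  set (p := vadd x (vscale t v)).
  destruct (Hg p (eps / (2 * (nv + 1)))) as [dl [Hdl H]].
  { apply Rdiv_lt_0_compat; lra. }
  assert (Hdp : 0 < dl / (nv + 1)) by (apply Rdiv_lt_0_compat; lra).
  exists (mkposreal _ Hdp); simpl; intros h Hh Hhd.
  assert (Hw : vsub (vadd x (vscale (t + h) v)) p = vscale h v) by (unfold p; vec_eq).
  specialize (H (vadd x (vscale (t + h) v))).
  rewrite Hw, norm_scale, inner_scale_r in H; fold nv in H.
  assert (Hah : 0 < Rabs h) by (apply Rabs_pos_lt; auto).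
  assert (Hhnv : Rabs h * (nv + 1) < dl).
  { apply (Rmult_lt_compat_r (nv + 1)) in Hhd; [|lra].
    unfold Rdiv in Hhd; rewrite Rmult_assoc, Rinv_l, Rmult_1_r in Hhd by lra; exact Hhd. }
  specialize (H ltac:(nra)).
  replace ((f (vadd x (vscale (t + h) v)) - f p) / h - inner (g p) v)
    with ((f (vadd x (vscale (t + h) v)) - f p - h * inner (g p) v) / h) by (field; auto).
  unfold Rdiv; rewrite Rabs_mult, Rabs_inv.
  apply (Rmult_lt_reg_r (Rabs h)); [assumption|].
  rewrite Rmult_assoc, Rinv_l, Rmult_1_r by lra.
  assert (eps / (2 * (nv + 1)) * nv < eps).
  { unfold Rdiv; rewrite Rmult_assoc.
    assert (/ (2 * (nv + 1)) * nv < 1).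
    { apply (Rmult_lt_reg_l (2 * (nv + 1))); [lra|].
      rewrite <- Rmult_assoc, Rinv_r by lra; lra. }
    nra. }
  nra.
Qed.

(* Convexity bounds the difference quotients at [0] by the chord slope [phi 1 - phi 0]. *)
Lemma deriv_le_chord_slope (phi : R -> R) l :
  (forall h, 0 <= h <= 1 -> phi h <= h * phi 1 + (1 - h) * phi 0) ->
  derivable_pt_lim phi 0 l -> l <= phi 1 - phi 0.
Proof.
  intros Hc Hd.
  destruct (Rle_dec l (phi 1 - phi 0)) as [|Hlt]; [assumption|exfalso].
  destruct (Hd (l - (phi 1 - phi 0))) as [[dl Hdl] H]; [lra|]; simpl in H.
  set (h := Rmin 1 (dl / 2)).
  assert (Hh0 : 0 < h) by (apply Rmin_pos; lra).
  assert (Hh1 : h <= 1) by apply Rmin_l.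
  assert (Hh2 : h <= dl / 2) by apply Rmin_r.
  specialize (H h ltac:(lra) ltac:(rewrite Rabs_right; lra)).
  rewrite Rplus_0_l in H.
  assert (Hq : (phi h - phi 0) / h <= phi 1 - phi 0).
  { apply (Rmult_le_reg_r h); [assumption|].
    unfold Rdiv; rewrite Rmult_assoc, Rinv_l by lra; specialize (Hc h ltac:(lra)); lra. }
  pose proof (Rle_abs ((phi h - phi 0) / h - l)) as Habs.
  pose proof (Rabs_Ropp ((phi h - phi 0) / h - l)).
  pose proof (Rle_abs (- ((phi h - phi 0) / h - l))).
  lra.
Qed.

Lemma convex_gradient_ineq d (f : vec d -> R) g : convex_fun f -> is_gradient f g ->
  forall z y, f z + inner (g z) (vsub y z) <= f y.
Proof.
  intros Hc Hg z y.
  assert (Hseg : forall s, vadd z (vscale s (vsub y z)) = vadd (vscale s y) (vscale (1 - s) z))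
    by (intros; vec_eq).
  assert (H0 : vadd z (vscale 0 (vsub y z)) = z) by vec_eq.
  assert (H1 : vadd z (vscale 1 (vsub y z)) = y) by vec_eq.
  pose proof (deriv_le_chord_slope (fun s => f (vadd z (vscale s (vsub y z))))
    (inner (g z) (vsub y z))) as Hslope; cbv beta in Hslope.
  rewrite H0, H1 in Hslope.
  enough (inner (g z) (vsub y z) <= f y - f z) by lra.
  apply Hslope.
  - intros h Hh; rewrite Hseg; apply Hc; exact Hh.
  - pose proof (gradient_directional_deriv d f g Hg z (vsub y z) 0) as Hd.
    rewrite H0 in Hd; exact Hd.
Qed.

Lemma descent_lemma d (f : vec d -> R) g L : is_gradient f g -> lipschitz g L ->
  forall x y, f y <= f x + inner (g x) (vsub y x) + L / 2 * norm (vsub y x) ^ 2.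
Proof.
  intros Hg HL x y; set (v := vsub y x).
  set (c1 := inner (g x) v); set (c2 := L / 2 * norm v ^ 2).
  set (psi := fun s => f (vadd x (vscale s v)) - (c1 * s + c2 * s ^ 2)).
  set (psi' := fun s => inner (g (vadd x (vscale s v))) v - (c1 * 1 + c2 * (INR 2 * s ^ 1))).
  assert (Hd : forall s, 0 <= s <= 1 -> derivable_pt_lim psi s (psi' s)).
  { intros s _; apply derivable_pt_lim_minus; [apply gradient_directional_deriv, Hg|].
    apply derivable_pt_lim_plus.
    - apply (derivable_pt_lim_scal (fun s => s)), derivable_pt_lim_id.
    - apply (derivable_pt_lim_scal (fun s => s ^ 2)), derivable_pt_lim_pow. }
  destruct (MVT_cor2 psi psi' 0 1 Rlt_0_1 Hd) as [c [Hmvt Hc]].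
  assert (Hslope : psi' c <= 0).
  { assert (Hw : vsub (vadd x (vscale c v)) x = vscale c v) by vec_eq.
    pose proof (HL (vadd x (vscale c v)) x) as HLc.
    rewrite Hw, norm_scale, Rabs_right in HLc by lra.
    pose proof (cauchy_schwarz d (vsub (g (vadd x (vscale c v))) (g x)) v) as Hcs.
    rewrite inner_sub_l in Hcs; fold c1 in Hcs.
    pose proof (norm_ge0 d v).
    assert (norm (vsub (g (vadd x (vscale c v))) (g x)) * norm v <= L * (c * norm v) * norm v)
      by (apply Rmult_le_compat_r; auto).
    unfold psi', c2; simpl (INR 2); lra. }
  assert (Hy : vadd x (vscale 1 v) = y) by (unfold v; vec_eq).
  assert (Hx : vadd x (vscale 0 v) = x) by vec_eq.
  unfold psi in Hmvt; rewrite Hy, Hx in Hmvt.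
  fold v c1 c2; nra.
Qed.

Lemma nonneg_of_quadratic_nonneg_near0 A B :
  (forall t, 0 < t <= 1 -> 0 <= t * A + t * t * B) -> 0 <= A.
Proof.
  intros H; destruct (Rle_dec 0 A) as [|HA]; [assumption|exfalso].
  pose proof (Rabs_pos B); pose proof (Rle_abs B).
  set (t := Rmin 1 (- A / (Rabs B + 1))).
  assert (Ht0 : 0 < t) by (apply Rmin_pos; [lra|apply Rdiv_lt_0_compat; lra]).
  assert (Ht1 : t <= 1) by apply Rmin_l.
  assert (Ht2 : t * (Rabs B + 1) <= - A).
  { pose proof (Rmin_r 1 (- A / (Rabs B + 1))) as Hr; fold t in Hr.
    apply (Rmult_le_compat_r (Rabs B + 1)) in Hr; [|lra].
    unfold Rdiv in Hr; rewrite Rmult_assoc, Rinv_l, Rmult_1_r in Hr by lra; exact Hr. }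
  specialize (H t (conj Ht0 Ht1)).
  assert (0 <= A + t * B) by (apply (Rmult_le_reg_l t); [assumption|]; lra).
  nra.
Qed.

Lemma prox_three_point d (dom : vec d -> Prop) hv (gk a p : vec d) alpha :
  0 < alpha -> convex_ext dom hv ->
  is_argmin dom (fun y => hv y + inner gk (vsub y a) + / (2 * alpha) * norm (vsub y a) ^ 2) p ->
  forall y, dom y ->
    hv p + inner gk (vsub p y) + / (2 * alpha) * (norm (vsub p a) ^ 2 + norm (vsub y p) ^ 2)
      <= hv y + / (2 * alpha) * norm (vsub y a) ^ 2.
Proof.
  intros Ha Hc [Hp Hmin] y Hy.
  set (b := vsub y p); set (e := vsub p a); set (K := / (2 * alpha)).
  assert (HK : 0 < K) by (apply Rinv_0_lt_compat; lra).
  assert (HA : 0 <= hv y - hv p + inner gk b + 2 * K * inner e b).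
  { apply nonneg_of_quadratic_nonneg_near0 with (B := K * inner b b); intros t Ht.
    set (w := vadd (vscale t y) (vscale (1 - t) p)).
    destruct (Hc y p t Hy Hp ltac:(lra)) as [Hw Hhw]; fold w in Hw, Hhw.
    specialize (Hmin w Hw); cbv beta in Hmin.
    replace (vsub w a) with (vadd e (vscale t b)) in Hmin by (unfold w, e, b; vec_eq).
    rewrite !norm_sq, !inner_add_l, !inner_add_r, !inner_scale_l, !inner_scale_r,
      (inner_sym d b e) in Hmin.
    fold e K in Hmin; clearbody w b e K; nra. }
  replace (vsub y a) with (vadd b e) by (unfold b, e; vec_eq).
  replace (vsub p y) with (vscale (-1) b) by (unfold b; vec_eq).
  fold b e K; rewrite !norm_sq, !inner_add_l, !inner_add_r, inner_scale_r, (inner_sym d b e).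
  nra.
Qed.

(* The paper's [sum_(j = k - tau)^k ||x_(j+1) - x_j||^2], indexed by [i = k - j]; the terms
   with [j < 0] vanish by the convention [x_j = x_0]. *)
Definition delay_window {d} (x : nat -> vec d) (k tau : nat) : R :=
  sum_f_R0 (fun i => if (i <=? k)%nat
                     then norm (vsub (x (k - i + 1)%nat) (x (k - i)%nat)) ^ 2 else 0) tau.

Lemma norm_telescope d (x : nat -> vec d) k m : (m <= k)%nat ->
  norm (vsub (x (S k)) (x (k - m)%nat)) <=
    sum_f_R0 (fun i => norm (vsub (x (k - i + 1)%nat) (x (k - i)%nat))) m.
Proof.
  induction m as [|m IH]; intros Hm; simpl.
  - replace (k - 0 + 1)%nat with (S k) by lia; rewrite Nat.sub_0_r; lra.
  - replace (vsub (x (S k)) (x (k - S m)%nat))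
      with (vadd (vsub (x (S k)) (x (k - m)%nat)) (vsub (x (k - m)%nat) (x (k - S m)%nat)))
      by vec_eq.
    replace (k - S m + 1)%nat with (k - m)%nat by lia.
    pose proof (norm_triangle d (vsub (x (S k)) (x (k - m)%nat))
                  (vsub (x (k - m)%nat) (x (k - S m)%nat))).
    specialize (IH ltac:(lia)); lra.
Qed.

Lemma sum_f_R0_sq_le (c : nat -> R) m :
  sum_f_R0 c m ^ 2 <= (INR m + 1) * sum_f_R0 (fun i => c i ^ 2) m.
Proof.
  induction m as [|m IH]; [simpl; lra|]; cbn [sum_f_R0]; rewrite S_INR.
  set (s := sum_f_R0 c m) in *; set (q := sum_f_R0 (fun i => c i ^ 2) m) in *.
  set (u := c (S m)); set (M := INR m + 1) in *.
  assert (HM : 0 < M) by (pose proof (pos_INR m); unfold M; lra).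
  (* AM-GM: [2 s u <= s^2 / M + M u^2 <= q + M u^2] *)
  assert (H2 : 2 * s * u <= q + M * u * u).
  { apply (Rmult_le_reg_r M); [assumption|].
    assert (0 <= (s - M * u) ^ 2) by apply pow2_ge_0; nra. }
  nra.
Qed.

Lemma delay_window_bound d (x : nat -> vec d) k dl tau : (dl <= tau)%nat ->
  norm (vsub (x (S k)) (x (k - dl)%nat)) ^ 2 <= (INR tau + 1) * delay_window x k tau.
Proof.
  intros Hdl; set (m := Nat.min dl k).
  replace (k - dl)%nat with (k - m)%nat by (unfold m; lia).
  set (c := fun i => norm (vsub (x (k - i + 1)%nat) (x (k - i)%nat))).
  set (w := fun i => if (i <=? k)%nat then c i ^ 2 else 0).
  assert (Hw : forall i, 0 <= w i) by (intro i; unfold w; destruct (i <=? k)%nat; [apply pow2_ge_0|lra]).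
  assert (Htel : norm (vsub (x (S k)) (x (k - m)%nat)) ^ 2 <= sum_f_R0 c m ^ 2).
  { pose proof (norm_telescope d x k m ltac:(unfold m; lia)) as Ht; fold c in Ht.
    apply pow_incr; split; [apply norm_ge0|exact Ht]. }
  assert (Hcw : sum_f_R0 (fun i => c i ^ 2) m = sum_f_R0 w m).
  { apply sum_eq; intros i Hi; unfold w.
    replace (i <=? k)%nat with true by (symmetry; apply Nat.leb_le; unfold m in Hi; lia).
    reflexivity. }
  assert (Hmono : sum_f_R0 w m <= sum_f_R0 w tau).
  { destruct (Nat.eq_dec m tau) as [->|Hne]; [lra|].
    rewrite (tech2 w m tau) by (unfold m in *; lia).
    pose proof (cond_pos_sum (fun i => w (S m + i)%nat) (tau - S m) (fun i => Hw _)); lra. }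
  pose proof (sum_f_R0_sq_le c m) as Hsq.
  pose proof (cond_pos_sum w m Hw).
  assert (INR m <= INR tau) by (apply le_INR; unfold m; lia).
  pose proof (pos_INR m).
  change (delay_window x k tau) with (sum_f_R0 w tau).
  rewrite Hcw in Hsq; nra.
Qed.

Lemma delay_window_degenerate d (x : nat -> vec d) k tau :
  (forall u w : vec d, norm (vsub u w) = 0) -> delay_window x k tau = 0.
Proof.
  intros H0; unfold delay_window; rewrite (sum_eq _ (fun _ => 0)), sum_cte; [ring|].
  intros i _; destruct (i <=? k)%nat; [rewrite H0; ring|reflexivity].
Qed.

Lemma dist_set_is_inf d (X : vec d -> Prop) x : (exists y, X y) ->
  is_inf (fun r => exists y, X y /\ r = norm (vsub x y)) (dist_set X x).
Proof.
  intros [y0 Hy0]; unfold dist_set; apply epsilon_spec.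
  set (E := fun r => exists y, X y /\ r = - norm (vsub x y)).
  assert (Hb : bound E).
  { exists 0; intros r [y [_ ->]]; pose proof (norm_ge0 d (vsub x y)); lra. }
  destruct (completeness E Hb (ex_intro _ _ (ex_intro _ y0 (conj Hy0 eq_refl))))
    as [l [Hub Hlub]].
  exists (- l); split.
  - intros r [y [Hy ->]]; enough (- norm (vsub x y) <= l) by lra.
    apply Hub; exists y; auto.
  - intros m' Hm'; enough (l <= - m') by lra.
    apply Hlub; intros r [y [Hy ->]]; specialize (Hm' _ (ex_intro _ y (conj Hy eq_refl))); lra.
Qed.

Lemma dist_set_sq_le d (X : vec d -> Prop) x y : X y ->
  dist_set X x ^ 2 <= norm (vsub x y) ^ 2.
Proof.
  intros Hy; destruct (dist_set_is_inf d X x (ex_intro _ y Hy)) as [Hlb Hglb].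
  assert (0 <= dist_set X x) by (apply Hglb; intros r [z [_ ->]]; apply norm_ge0).
  apply pow_incr; split; [assumption|]; apply Hlb; exists y; auto.
Qed.

Lemma dist_set_sq_ge d (X : vec d -> Prop) x c K : (exists y, X y) -> 0 < K ->
  (forall y, X y -> c <= K * norm (vsub x y) ^ 2) -> c <= K * dist_set X x ^ 2.
Proof.
  intros Hne HK Hc.
  destruct (Rle_dec c 0) as [|Hpos]; [pose proof (pow2_ge_0 (dist_set X x)); nra|].
  destruct (dist_set_is_inf d X x Hne) as [_ Hglb].
  assert (Hs : sqrt (c / K) <= dist_set X x).
  { apply Hglb; intros r [y [Hy ->]].
    rewrite <- (sqrt_pow2 (norm (vsub x y))) by apply norm_ge0.
    apply sqrt_le_1_alt; specialize (Hc y Hy).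
    apply (Rmult_le_reg_l K); [assumption|]; unfold Rdiv.
    rewrite (Rmult_comm c), <- Rmult_assoc, Rinv_r, Rmult_1_l by lra; exact Hc. }
  assert (Hsq : c / K <= dist_set X x ^ 2).
  { rewrite <- (pow2_sqrt (c / K)) by (apply Rlt_le, Rdiv_lt_0_compat; lra).
    apply pow_incr; split; [apply sqrt_pos|assumption]. }
  apply (Rmult_le_compat_l K) in Hsq; [|lra].
  unfold Rdiv in Hsq; rewrite (Rmult_comm c), <- Rmult_assoc, Rinv_r, Rmult_1_l in Hsq by lra.
  exact Hsq.
Qed.

Lemma sumR_le (N : nat) (a b : nat -> R) :
  (forall n, (n < N)%nat -> a n <= b n) -> sumR N a <= sumR N b.
Proof.
  induction N as [|N IH]; intros H; simpl; [lra|].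
  pose proof (H N ltac:(lia)); pose proof (IH (fun n Hn => H n ltac:(lia))); lra.
Qed.

Lemma sumR_plus (N : nat) (a b : nat -> R) :
  sumR N (fun n => a n + b n) = sumR N a + sumR N b.
Proof. induction N as [|N IH]; simpl; [ring|]; rewrite IH; ring. Qed.

Lemma sumR_mult_r (N : nat) (a : nat -> R) c :
  sumR N (fun n => a n * c) = sumR N a * c.
Proof. induction N as [|N IH]; simpl; [ring|]; rewrite IH; ring. Qed.

Lemma inner_vsum_l d N (v : nat -> vec d) w :
  inner (vsum N v) w = sumR N (fun n => inner (v n) w).
Proof.
  induction N as [|N IH]; simpl.
  - rewrite <- (Rmult_0_l (fsum d w)), <- fsum_scal; apply fsum_ext; intros; unfold vsum; simpl; ring.
  - rewrite <- IH; apply inner_add_l.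
Qed.

Lemma lipschitz_neg_degenerate d (g : vec d -> vec d) L : L < 0 -> lipschitz g L ->
  forall u w : vec d, norm (vsub u w) = 0.
Proof.
  intros HL Hg u w; pose proof (Hg u w); pose proof (norm_ge0 d (vsub u w)).
  pose proof (norm_ge0 d (vsub (g u) (g w))); nra.
Qed.

Lemma smooth_convex_upper_bound d (f : vec d -> R) g L :
  convex_fun f -> is_gradient f g -> lipschitz g L ->
  forall z p y, f p <= f y + inner (g z) (vsub p y) + L / 2 * norm (vsub p z) ^ 2.
Proof.
  intros Hc Hg HL z p y.
  pose proof (descent_lemma d f g L Hg HL z p).
  pose proof (convex_gradient_ineq d f g Hc Hg z y).
  replace (vsub p y) with (vsub (vsub p z) (vsub y z)) by vec_eq.
  rewrite inner_sub_r; lra.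
Qed.

Lemma delayed_gradient_bound d (f : vec d -> R) g L (x : nat -> vec d) k dl tau :
  convex_fun f -> is_gradient f g -> lipschitz g L -> (dl <= tau)%nat -> forall y,
  f (x (S k)) <= f y + inner (g (x (k - dl)%nat)) (vsub (x (S k)) y)
                 + L * (INR tau + 1) / 2 * delay_window x k tau.
Proof.
  intros Hc Hg HL Hdl y.
  pose proof (smooth_convex_upper_bound d f g L Hc Hg HL (x (k - dl)%nat) (x (S k)) y).
  enough (L / 2 * norm (vsub (x (S k)) (x (k - dl)%nat)) ^ 2
            <= L * (INR tau + 1) / 2 * delay_window x k tau) by lra.
  destruct (Rle_dec 0 L) as [HL0|HLneg].
  - pose proof (delay_window_bound d x k dl tau Hdl); nra.
  - pose proof (lipschitz_neg_degenerate d g L ltac:(lra) HL) as H0.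
    rewrite H0, (delay_window_degenerate d x k tau H0); lra.
Qed.

Lemma FF_delayed_gradient_bound d N tau (f : nat -> vec d -> R) gf Ln delay
    (x : nat -> vec d) k :
  (forall n, (n < N)%nat ->
     convex_fun (f n) /\ is_gradient (f n) (gf n) /\ lipschitz (gf n) (Ln n)) ->
  (forall n, (n < N)%nat -> (delay k n <= tau)%nat) ->
  forall y, FF N f (x (S k)) <=
    FF N f y + inner (vsum N (fun n => gf n (x (k - delay k n)%nat))) (vsub (x (S k)) y)
    + sumR N Ln * (INR tau + 1) / 2 * delay_window x k tau.
Proof.
  intros HA1 Hdel y; unfold FF; rewrite inner_vsum_l.
  replace (sumR N Ln * (INR tau + 1) / 2 * delay_window x k tau)
    with (sumR N (fun n => Ln n * ((INR tau + 1) / 2 * delay_window x k tau)))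
    by (rewrite sumR_mult_r; field).
  rewrite <- !sumR_plus; apply sumR_le; intros n Hn.
  destruct (HA1 n Hn) as [Hc [Hg HL]].
  pose proof (delayed_gradient_bound d (f n) (gf n) (Ln n) x k (delay k n) tau
                Hc Hg HL (Hdel n Hn) y).
  lra.
Qed.

Lemma piag_Phi_step_bound d N tau (f : nat -> vec d -> R) gf Ln domh hv delay alpha
    (x : nat -> vec d) k :
  (forall n, (n < N)%nat ->
     convex_fun (f n) /\ is_gradient (f n) (gf n) /\ lipschitz (gf n) (Ln n)) ->
  convex_ext domh hv ->
  (forall n, (n < N)%nat -> (delay k n <= tau)%nat) ->
  0 < alpha -> piag_step N gf delay domh hv alpha x k ->
  forall y, domh y ->
    Phi N f hv (x (S k)) + / (2 * alpha) * (norm (vsub (x (S k)) (x k)) ^ 2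
                                            + norm (vsub y (x (S k))) ^ 2)
    <= Phi N f hv y + / (2 * alpha) * norm (vsub y (x k)) ^ 2
       + sumR N Ln * (INR tau + 1) / 2 * delay_window x k tau.
Proof.
  intros HA1 Hconv Hdel Halpha Hstep y Hy.
  pose proof (prox_three_point d domh hv _ _ _ alpha Halpha Hconv Hstep y Hy).
  pose proof (FF_delayed_gradient_bound d N tau f gf Ln delay x k HA1 (fun n => Hdel n) y).
  unfold Phi; lra.
Qed.

Lemma quadratic_growth_contraction alpha beta q D : 0 < alpha -> 0 < beta ->
  q >= beta / 2 * D ^ 2 ->
  / (2 * alpha) * D ^ 2 <= (1 - alpha * beta / (1 + alpha * beta)) * (q + / (2 * alpha) * D ^ 2).
Proof.
  intros Ha Hb Hq.
  assert (Hid : (1 - alpha * beta / (1 + alpha * beta)) * (q + / (2 * alpha) * D ^ 2)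
                - / (2 * alpha) * D ^ 2 = / (1 + alpha * beta) * (q - beta / 2 * D ^ 2))
    by (field; split; nra).
  assert (0 <= / (1 + alpha * beta) * (q - beta / 2 * D ^ 2))
    by (apply Rmult_le_pos; [apply Rlt_le, Rinv_0_lt_compat; nra|lra]).
  lra.
Qed.

Theorem mainTheorem3 (d N tau : nat) (f : nat -> vec d -> R) (gf : nat -> vec d -> vec d)
  (Ln : nat -> R) (domh : vec d -> Prop) (hv : vec d -> R)
  (delay : nat -> nat -> nat) (alpha beta Phistar : R) (x : nat -> vec d) :
  (* A1 *)
  (forall n, (n < N)%nat ->
     convex_fun (f n) /\ is_gradient (f n) (gf n) /\
     (forall y z, norm (vsub (gf n y) (gf n z)) <= Ln n * norm (vsub y z))) ->
  (* A2 *)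
  proper_h domh -> closed_ext domh hv -> convex_ext domh hv -> subdiff_nonempty domh hv ->
  (* A3 *)
  (forall k n, (n < N)%nat -> (delay k n <= tau)%nat) ->
  (* A4: Phistar is the minimal value of Phi, attained (X nonempty), quadratic growth *)
  (exists xs, domh xs /\ Phi N f hv xs = Phistar) ->
  (forall y, domh y -> Phistar <= Phi N f hv y) ->
  0 < beta ->
  (forall y, domh y ->
     Phi N f hv y - Phistar >= beta / 2 * (dist_set (Xset N f domh hv Phistar) y) ^ 2) ->
  0 < alpha ->
  (forall k, piag_step N gf delay domh hv alpha x k) ->
  forall k, domh (x k) ->
    Psi N f domh hv Phistar alpha (x (S k)) <=
      (1 - alpha * beta / (1 + alpha * beta)) * Psi N f domh hv Phistar alpha (x k)
      - / (2 * alpha) * (norm (vsub (x (S k)) (x k))) ^ 2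
      + sumR N Ln * (INR tau + 1) / 2 *
        sum_f_R0 (fun i => if (i <=? k)%nat
                           then (norm (vsub (x (k - i + 1)%nat) (x (k - i)%nat))) ^ 2
                           else 0) tau.
Proof.
  intros HA1 _ _ Hconv _ Hdel Hex _ Hbeta Hqg Halpha Hstep k Hxk.
  change (sum_f_R0 _ tau) with (delay_window x k tau).
  set (X := Xset N f domh hv Phistar); set (K := / (2 * alpha)).
  set (slack := sumR N Ln * (INR tau + 1) / 2 * delay_window x k tau).
  assert (HK : 0 < K) by (apply Rinv_0_lt_compat; lra).
  (* comparing the step with every minimizer bounds it by the distance of [x k] to [X] *)
  assert (Hcomp : Psi N f domh hv Phistar alpha (x (S k)) + K * norm (vsub (x (S k)) (x k)) ^ 2
                  - slack <= K * dist_set X (x k) ^ 2).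
  { apply (dist_set_sq_ge d X); [exact Hex|exact HK|]; intros y [Hy HPhiy].
    pose proof (piag_Phi_step_bound d N tau f gf Ln domh hv delay alpha x k
                  HA1 Hconv (Hdel k) Halpha (Hstep k) y Hy) as Hstepy.
    pose proof (dist_set_sq_le d X (x (S k)) y (conj Hy HPhiy)) as Hdist.
    apply (Rmult_le_compat_l K) in Hdist; [|lra].
    rewrite (norm_vsub_sym d y), HPhiy in Hstepy; rewrite (norm_vsub_sym d (x k)).
    fold K slack in Hstepy; unfold Psi; fold X K; lra. }
  pose proof (quadratic_growth_contraction alpha beta _ _ Halpha Hbeta (Hqg (x k) Hxk)) as Hrate.
  fold X K in Hrate; unfold Psi at 2; fold X K; lra.
Qed.
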